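(* Suppose that $\theta<\kappa$ is a pair of infinite regular cardinals and $\boxminus^-(\kappa,\theta)$ holds. Then there exists an $E^\kappa_{\ge\theta}$-closed subadditive coloring $c:[\kappa]^2\to\theta$ witnessing $\mathrm U(\kappa,2,\theta,2)$. In particular, $\kappa$ is not weakly compact.
   Context: $E^\kappa_{\ge\theta}$ is the set of ordinals below $\kappa$ of cofinality $\ge\theta$; $\mathrm{acc}(A)=\{\alpha\in A\mid\sup(A\cap\alpha)=\alpha>0\}$. $\boxminus^-(\kappa,\theta)$ asserts the existence of $\langle C_{\alpha,i}\mid\alpha\in\mathrm{acc}(\kappa),\ i(\alpha)\le i<\theta\rangle$ such that: (1) for all $\alpha$, $i(\alpha)<\theta$ and $\langle C_{\alpha,i}\mid i(\alpha)\le i<\theta\rangle$ is a $\subseteq$-increasing sequence of clubs in $\alpha$ with $\mathrm{acc}(\alpha)=\bigcup_i\mathrm{acc}(C_{\alpha,i})$; (2) for all $\alpha$, $i(\alpha)\le i<\theta$ and $\bar\alpha\in\mathrm{acc}(C_{\alpha,i})\cap E^\kappa_{\ge\theta}$: $i(\bar\alpha)\le i$ and $C_{\bar\alpha,i}=C_{\alpha,i}\cap\bar\alpha$; (3) for all $\bar\alpha<\alpha$ in $\mathrm{acc}(\kappa)$ and all sufficiently large $i<\theta$, $C_{\bar\alpha,i}=C_{\alpha,i}\cap\bar\alpha$; (4) for every club $D\subseteq\kappa$ there is $\alpha\in\mathrm{acc}(D)\cap E^\kappa_{\ge\theta}$ with $D\cap\alpha\ne C_{\alpha,i}$ for all $i<\theta$.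 A coloring $c:[\kappa]^2\to\theta$ witnesses $\mathrm U(\kappa,2,\theta,2)$ if for every $H\in[\kappa]^\kappa$, $c``[H]^2$ is cofinal in $\theta$. It is subadditive if for all $\alpha<\beta<\gamma<\kappa$, $c(\alpha,\gamma)\le\max\{c(\alpha,\beta),c(\beta,\gamma)\}$ and $c(\alpha,\beta)\le\max\{c(\alpha,\gamma),c(\beta,\gamma)\}$. It is $\Sigma$-closed (for $\Sigma\subseteq\kappa$) if whenever $\alpha<\beta<\kappa$, $j<\theta$, $\alpha\in\Sigma$ and $\sup\{\varepsilon<\alpha\mid c(\varepsilon,\beta)\le j\}=\alpha$, then $c(\alpha,\beta)\le j$. *)

(* kappa is modelled as a type K carrying a strict well-order
   [lt]; its elements are the ordinals below kappa.  Ordinals below kappa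
   (e.g. theta, colours, indices) are elements of K. *)
From Stdlib Require Import List.
Set Implicit Arguments.

Section OrdinalCombinatorics.
Variables (K : Type) (lt : K -> K -> Prop).

Definition le (x y : K) : Prop := lt x y \/ x = y.

Definition strict_well_order : Prop :=
  (forall x, ~ lt x x) /\
  (forall x y z, lt x y -> lt y z -> lt x z) /\
  (forall x y, lt x y \/ x = y \/ lt y x) /\
  well_founded lt.

Definition full : K -> Prop := fun _ => True.
Definition below (a : K) : K -> Prop := fun x => lt x a.

Definition subset (A B : K -> Prop) : Prop := forall x, A x -> B x.

Definition card_le (A B : K -> Prop) : Prop :=
  exists f : K -> K, (forall x, A x -> B (f x)) /\
    (forall x y, A x -> A y -> f x = f y -> x = y).

Definition finite_set (A : K -> Prop) : Prop :=
  exists l : list K, forall x, A x -> In x l.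

Definition cofinal_in (a : K) (X : K -> Prop) : Prop :=
  subset X (below a) /\ forall b, lt b a -> exists x, X x /\ le b x.

Definition unbounded (X : K -> Prop) : Prop :=
  forall b, exists x, X x /\ le b x.

Definition is_cardinal (a : K) : Prop :=
  forall b, lt b a -> ~ card_le (below a) (below b).

Definition infinite_regular (a : K) : Prop :=
  is_cardinal a /\ ~ finite_set (below a) /\
  forall X, cofinal_in a X -> card_le (below a) X.

Definition kappa_infinite_regular : Prop :=
  (forall b, ~ card_le full (below b)) /\ ~ finite_set full /\
  forall X, unbounded X -> card_le full X.

Definition cof_ge (theta a : K) : Prop :=
  forall X, cofinal_in a X -> card_le (below theta) X.

Definition E_ge (theta : K) : K -> Prop := fun a => cof_ge theta a.

Definition acc (A : K -> Prop) (a : K) : Prop :=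
  (exists b, lt b a) /\
  forall b, lt b a -> exists g, A g /\ lt b g /\ lt g a.

Definition club_in (a : K) (C : K -> Prop) : Prop :=
  cofinal_in a C /\ forall b, lt b a -> acc C b -> C b.

Definition club (D : K -> Prop) : Prop :=
  unbounded D /\ forall b, acc D b -> D b.

Definition set_eq (A B : K -> Prop) : Prop := forall x, A x <-> B x.

Definition restrict (A : K -> Prop) (a : K) : K -> Prop :=
  fun x => A x /\ lt x a.

Definition boxminus_minus_seq (theta : K)
    (C : K -> K -> K -> Prop) (i : K -> K) : Prop :=
  (* (1) *)
  (forall a, acc full a ->
     lt (i a) theta /\
     (forall j, le (i a) j -> lt j theta -> club_in a (C a j)) /\
     (forall j j', le (i a) j -> le j j' -> lt j' theta ->
        subset (C a j) (C a j')) /\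
     (forall b, acc (below a) b <->
        exists j, le (i a) j /\ lt j theta /\ acc (C a j) b)) /\
  (* (2) *)
  (forall a j ab, acc full a -> le (i a) j -> lt j theta ->
     acc (C a j) ab -> E_ge theta ab ->
     le (i ab) j /\ set_eq (C ab j) (restrict (C a j) ab)) /\
  (* (3) *)
  (forall ab a, acc full ab -> acc full a -> lt ab a ->
     exists j0, lt j0 theta /\
       forall j, le j0 j -> lt j theta -> le (i a) j -> le (i ab) j ->
         set_eq (C ab j) (restrict (C a j) ab)) /\
  (* (4) *)
  (forall D, club D ->
     exists a, acc D a /\ E_ge theta a /\
       forall j, le (i a) j -> lt j theta ->
         ~ set_eq (restrict D a) (C a j)).

Definition boxminus_minus (theta : K) : Prop :=
  exists (C : K -> K -> K -> Prop) (i : K -> K), boxminus_minus_seq theta C i.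

(* c : [kappa]^2 -> theta, with c a b read for a < b *)
Definition coloring_into (theta : K) (c : K -> K -> K) : Prop :=
  forall a b, lt a b -> lt (c a b) theta.

Definition witnesses_U (theta : K) (c : K -> K -> K) : Prop :=
  forall H, card_le full H ->
    forall j, lt j theta ->
      exists a b, H a /\ H b /\ lt a b /\ le j (c a b).

Definition subadditive (c : K -> K -> K) : Prop :=
  forall a b g, lt a b -> lt b g ->
    (le (c a g) (c a b) \/ le (c a g) (c b g)) /\
    (le (c a b) (c a g) \/ le (c a b) (c b g)).

Definition sigma_closed (theta : K) (Sigma : K -> Prop) (c : K -> K -> K)
  : Prop :=
  forall a b j, lt a b -> lt j theta -> Sigma a ->
    acc (fun e => le (c e b) j) a -> le (c a b) j.

(* kappa is weakly compact: kappa > omega and kappa -> (kappa)^2_2 *)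
Definition weakly_compact : Prop :=
  (~ exists f : K -> nat, forall x y, f x = f y -> x = y) /\
  forall f : K -> K -> bool, exists H, card_le full H /\
    exists bcol : bool, forall x y, H x -> H y -> lt x y -> f x y = bcol.

End OrdinalCombinatorics.

(* Let λ(x) be the least limit ordinal >= x, and let c(x, y) be the least k < θ
   from which on the clubs at λ(x) <= λ(y) cohere: C_{λ(x),k'} = C_{λ(y),k'} ∩ λ(x)
   for all k' in [k, θ); clause (3) makes this well defined.  Coherence is
   transitive and can be cancelled, which gives subadditivity.  If a ∈ E^κ_{≥θ}
   is a limit of points e with c(e, y) <= j, then either some λ(e) is a itself or
   a is an accumulation point of every C_{λ(y),k'}, k' >= j, and clause (2) gives
   c(a, y) <= j.  If c were bounded by j on a set H of size κ, the clubs
   C_{λ(y),j} (y ∈ H) would cohere and their union would be a club of κ threaded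
   by the sequence, against clause (4).

   If κ were weakly compact, a set homogeneous for the lexicographic comparison
   of an injection of κ into θ^l yields an injection of κ into θ^d for some d < l,
   so θ^l < κ for all l < κ.  With this, homogeneity for the lexicographic
   comparison of the functions c(-, y) produces a cofinal branch s through them.
   Some colour v is taken by s on a set of size κ, and for x < x' in that set,
   subadditivity through a suitable y bounds c(x, x') by v, against U(κ, 2, θ, 2). *)

From Stdlib Require Import List Classical ClassicalEpsilon FunctionalExtensionality.

Section Order.
Variables (K : Type) (lt : K -> K -> Prop).
Hypothesis Hwo : strict_well_order lt.

Lemma lt_irrefl x : ~ lt x x.
Proof. destruct Hwo as [H _]; apply H. Qed.

Lemma lt_trans x y z : lt x y -> lt y z -> lt x z.
Proof. destruct Hwo as [_ [H _]]; apply H. Qed.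

Lemma lt_total x y : lt x y \/ x = y \/ lt y x.
Proof. destruct Hwo as [_ [_ [H _]]]; apply H. Qed.

Lemma lt_wf : well_founded lt.
Proof. destruct Hwo as [_ [_ [_ H]]]; apply H. Qed.

Lemma le_refl x : le lt x x.
Proof. now right. Qed.

Lemma lt_le x y : lt x y -> le lt x y.
Proof. now left. Qed.

Lemma le_lt_trans x y z : le lt x y -> lt y z -> lt x z.
Proof. intros [H|<-] H'; eauto using lt_trans. Qed.

Lemma lt_le_trans x y z : lt x y -> le lt y z -> lt x z.
Proof. intros H [H'|<-]; eauto using lt_trans. Qed.

Lemma le_trans x y z : le lt x y -> le lt y z -> le lt x z.
Proof. intros H [H'|<-]; auto. left; eapply le_lt_trans; eauto. Qed.

Lemma le_not_lt x y : le lt x y -> ~ lt y x.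
Proof. intros H H'. apply (lt_irrefl x). eapply le_lt_trans; eauto. Qed.

Lemma not_lt_le x y : ~ lt x y -> le lt y x.
Proof.
  intros H. destruct (lt_total x y) as [h|[<-|h]]; [contradiction|apply le_refl|now left].
Qed.

Lemma not_le_lt x y : ~ le lt x y -> lt y x.
Proof.
  intros H. destruct (lt_total y x) as [h|[<-|h]]; auto; exfalso; apply H;
    [apply le_refl|now left].
Qed.

Lemma le_antisym x y : le lt x y -> le lt y x -> x = y.
Proof. intros [H|H] H'; auto. exfalso; eapply le_not_lt; eauto. Qed.

Lemma le_either (P : K -> Prop) p q r :
  P p -> P q -> (forall m, P m -> le lt p m -> le lt q m -> le lt r m) ->
  le lt r p \/ le lt r q.
Proof.
  intros Hp Hq H. destruct (lt_total p q) as [h|[<-|h]].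
  - right. apply H; auto using lt_le, le_refl.
  - left. apply H; auto using le_refl.
  - left. apply H; auto using lt_le, le_refl.
Qed.

Lemma exists_common_bound (P : K -> Prop) p q :
  P p -> P q -> exists m, P m /\ le lt p m /\ le lt q m.
Proof.
  intros Hp Hq. destruct (lt_total p q) as [h|[<-|h]].
  - exists q. auto using lt_le, le_refl.
  - exists p. auto using le_refl.
  - exists p. auto using lt_le, le_refl.
Qed.

Lemma least_exists (P : K -> Prop) :
  (exists x, P x) -> exists x, P x /\ forall y, P y -> le lt x y.
Proof.
  intros [x Hx]. induction x as [x IH] using (well_founded_ind lt_wf).
  destruct (classic (exists y, P y /\ lt y x)) as [[y [Py Hy]]|N].
  - exact (IH y Hy Py).
  - exists x. split; auto. intros y Py. apply not_lt_le. intros h. apply N. eauto.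
Qed.

Lemma card_le_singleton_finite (A : K -> Prop) j :
  A j -> card_le A (fun y => y = j) -> finite_set A.
Proof.
  intros Hj [f [Hf Hinj]]. exists (j :: nil). intros x Hx. left.
  apply Hinj; auto. now rewrite (Hf j Hj), (Hf x Hx).
Qed.

Lemma regular_exists_between theta j :
  infinite_regular lt theta -> lt j theta -> exists j', lt j j' /\ lt j' theta.
Proof.
  intros [_ [Hfin Hreg]] Hj. apply NNPP. intros N. apply Hfin.
  apply (card_le_singleton_finite _ j Hj), Hreg. split.
  - now intros y ->.
  - intros b Hb. exists j. split; auto. apply not_lt_le. intros h. apply N. eauto.
Qed.

Definition is_limit (a : K) : Prop := acc lt (@full K) a.

Lemma is_limit_of_acc A a : acc lt A a -> is_limit a.
Proof.
  intros [Ha Hacc]. split; auto. intros b Hb.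
  destruct (Hacc b Hb) as [g [_ Hg]]. now exists g.
Qed.

Definition lex (r : K -> K -> Prop) (l : K) (u v : K -> K) : Prop :=
  exists d, lt d l /\ (forall e, lt e d -> u e = v e) /\ r (u d) (v d).

Lemma lex_total l u v :
  (exists d, lt d l /\ u d <> v d) -> lex lt l u v \/ lex lt l v u.
Proof.
  intros Hex. destruct (least_exists _ Hex) as [d [[Hd Hne] Hmin]].
  assert (Hagree : forall e, lt e d -> u e = v e).
  { intros e He. apply NNPP. intros N.
    apply (le_not_lt _ _ (Hmin e (conj (lt_trans _ _ _ He Hd) N)) He). }
  destruct (lt_total (u d) (v d)) as [h|[h|h]]; [left|contradiction|right].
  - now exists d.
  - exists d. repeat split; auto. intros e He. symmetry. auto.
Qed.

Lemma lex_asym l1 l2 u v : lex lt l1 u v -> lex lt l2 v u -> False.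
Proof.
  intros [d1 [_ [A1 R1]]] [d2 [_ [A2 R2]]].
  destruct (lt_total d1 d2) as [h|[<-|h]].
  - rewrite (A2 d1 h) in R1. exact (lt_irrefl _ R1).
  - exact (lt_irrefl _ (lt_trans _ _ _ R1 R2)).
  - rewrite (A1 d2 h) in R2. exact (lt_irrefl _ R2).
Qed.

Lemma lex_flip l u v : lex lt l v u -> lex (fun p q => lt q p) l u v.
Proof.
  intros [d [Hd [Hagree Hr]]]. exists d. repeat split; auto.
  intros e He. symmetry. auto.
Qed.

Lemma lex_agree r a a' u v u' v' :
  le lt a a' -> (forall x, lt x a -> u x = u' x) -> (forall x, lt x a -> v x = v' x) ->
  lex r a u v -> lex r a' u' v'.
Proof.
  intros Ha Hu Hv [d [Hd [Hagree Hr]]]. exists d.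
  split; [eapply lt_le_trans; eauto|split].
  - intros e He. assert (lt e a) by (eapply lt_trans; eauto). rewrite <- Hu, <- Hv; auto.
  - rewrite <- Hu, <- Hv; auto.
Qed.

(* The restriction of [u] to [a] as a total function (junk value [a] outside [a]),
   so that restrictions can be compared with [=]. *)
Definition trunc (a : K) (u : K -> K) : K -> K :=
  fun x => if excluded_middle_informative (lt x a) then u x else a.

Lemma trunc_lt a u x : lt x a -> trunc a u x = u x.
Proof. intros h. unfold trunc. now destruct (excluded_middle_informative (lt x a)). Qed.

Lemma trunc_ext a u v : (forall x, lt x a -> u x = v x) -> trunc a u = trunc a v.
Proof.
  intros H. apply functional_extensionality. intros x. unfold trunc.
  destruct (excluded_middle_informative (lt x a)); auto.
Qed.

Section Kappa.
Hypothesis Hkappa : kappa_infinite_regular lt.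

Lemma K_inhabited : inhabited K.
Proof.
  apply NNPP. intros N. destruct Hkappa as [_ [Hfin _]]. apply Hfin.
  exists nil. intros x _. apply N. now constructor.
Qed.

Lemma exists_gt x : exists y, lt x y.
Proof.
  apply NNPP. intros N. destruct Hkappa as [_ [Hfin Hreg]]. apply Hfin.
  apply (card_le_singleton_finite _ x I), Hreg. intros b. exists x. split; auto.
  apply not_lt_le. intros h. apply N. eauto.
Qed.

Lemma card_full_of_unbounded X : unbounded lt X -> card_le (@full K) X.
Proof. destruct Hkappa as [_ [_ H]]. apply H. Qed.

Lemma unbounded_of_card_full X : card_le (@full K) X -> unbounded lt X.
Proof.
  intros [f [Hf Hinj]] b. apply NNPP. intros N.
  destruct Hkappa as [H _]. apply (H b). exists f. split; auto.
  intros x _. apply not_le_lt. intros h. apply N. exists (f x). split; auto. apply Hf. exact I.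
Qed.

Lemma unbounded_gt X : unbounded lt X -> forall b, exists y, X y /\ lt b y.
Proof.
  intros HX b. destruct (exists_gt b) as [b' Hb']. destruct (HX b') as [y [Hy Hy']].
  exists y. split; auto. eapply lt_le_trans; eauto.
Qed.

Lemma unbounded_above X a : unbounded lt X -> unbounded lt (fun b => X b /\ lt a b).
Proof.
  intros HX y. destruct (exists_common_bound (@full K) a y I I) as [m [_ [Ham Hym]]].
  destruct (unbounded_gt X HX m) as [b [Hb Hmb]].
  exists b. split; [split; auto|left]; eapply le_lt_trans; eauto.
Qed.

Definition least (P : K -> Prop) : K :=
  epsilon K_inhabited (fun x => P x /\ forall y, P y -> le lt x y).

Lemma least_spec P : (exists x, P x) -> P (least P) /\ forall y, P y -> le lt (least P) y.
Proof. intros H. unfold least. apply epsilon_spec, least_exists, H. Qed.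

Lemma unbounded_fiber (Y : Type) (X : K -> Prop) (f : K -> Y) :
  unbounded lt X ->
  (forall g : K -> K, (forall z, X (g z)) -> ~ (forall z z', f (g z) = f (g z') -> z = z')) ->
  exists y, unbounded lt (fun x => X x /\ f x = y).
Proof.
  intros HX Hsmall. apply NNPP. intros N.
  assert (Hbound : forall y, exists B, forall x, X x -> f x = y -> lt x B).
  { intros y. apply NNPP. intros N2. apply N. exists y. intros b.
    apply NNPP. intros N3. apply N2. exists b. intros x Hx Hf.
    apply not_le_lt. intros h. apply N3. now exists x. }
  set (B := fun y => least (fun B => forall x, X x -> f x = y -> lt x B)).
  assert (HB : forall x, X x -> lt x (B (f x))).
  { intros x Hx. now apply (least_spec _ (Hbound (f x))). }
  (* Either the bounds B (f x), x in X, are unbounded, and points of X realising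
     kappa many of them have distinct values under f, or they are bounded, and so is X. *)
  set (Bounds := fun m => exists x, X x /\ B (f x) = m).
  destruct (classic (unbounded lt Bounds)) as [HU|HU].
  - destruct (card_full_of_unbounded _ HU) as [h [Hh Hinj]].
    set (p := fun z => least (fun x => X x /\ B (f x) = h z)).
    assert (Hp : forall z, X (p z) /\ B (f (p z)) = h z).
    { intros z. apply (least_spec (fun x => X x /\ B (f x) = h z)), (Hh z I). }
    apply (Hsmall p).
    + intros z. apply Hp.
    + intros z z' E. apply Hinj; try exact I.
      now rewrite <- (proj2 (Hp z)), <- (proj2 (Hp z')), E.
  - apply HU. intros b. apply NNPP. intros N4.
    assert (HM : exists M, forall m, Bounds m -> lt m M).
    { exists b. intros m Hm. apply not_le_lt. intros h. apply N4. now exists m. }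
    destruct HM as [M HM]. destruct (HX M) as [x [Hx HxM]].
    apply (le_not_lt _ _ HxM). eapply lt_trans; [apply (HB x Hx)|].
    apply HM. now exists x.
Qed.

Lemma unbounded_fiber_bounded (X : K -> Prop) (f : K -> K) b :
  unbounded lt X -> (forall x, X x -> lt (f x) b) ->
  exists v, unbounded lt (fun x => X x /\ f x = v).
Proof.
  intros HX Hf. apply unbounded_fiber; auto.
  intros g Hg Hinj. destruct Hkappa as [H _]. apply (H b).
  exists (fun z => f (g z)). split.
  - intros z _. apply Hf, Hg.
  - intros z z' _ _. apply Hinj.
Qed.

Definition embeds_in_power (theta l : K) : Prop :=
  exists e : K -> K -> K, (forall x d, lt d l -> lt (e x d) theta) /\
    (forall x y, (forall d, lt d l -> e x d = e y d) -> x = y).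

Section LexChain.
Variables (theta : K) (r : K -> K -> Prop) (l : K) (e : K -> K -> K) (H : K -> Prop).
Hypothesis r_trans : forall p q s, r p q -> r q s -> r p s.
Hypothesis r_irrefl : forall p, ~ r p p.
Hypothesis HU : unbounded lt H.
Hypothesis Hchain : forall x y, H x -> H y -> lt x y -> lex r l (e x) (e y).
Hypothesis Hval : forall x d, lt d l -> lt (e x d) theta.

Definition next_in (x : K) : K := least (fun y => H y /\ lt x y).

Lemma next_in_spec x :
  H (next_in x) /\ lt x (next_in x) /\ forall z, H z -> lt x z -> le lt (next_in x) z.
Proof.
  destruct (least_spec (fun y => H y /\ lt x y)) as [[Hn Hxn] Hmin].
  - now apply unbounded_gt.
  - split; [|split]; auto.
Qed.

Definition split_point (x : K) : K :=
  least (fun d => lt d l /\ (forall d', lt d' d -> e x d' = e (next_in x) d') /\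
                  r (e x d) (e (next_in x) d)).

Lemma split_point_spec x : H x ->
  lt (split_point x) l /\
  (forall d', lt d' (split_point x) -> e x d' = e (next_in x) d') /\
  r (e x (split_point x)) (e (next_in x) (split_point x)).
Proof.
  intros Hx. destruct (next_in_spec x) as [Hn [Hxn _]].
  exact (proj1 (least_spec _ (Hchain _ _ Hx Hn Hxn))).
Qed.

Lemma split_point_separates x x' : H x -> H x' -> lt x x' ->
  e x (split_point x) = e x' (split_point x) ->
  ~ (forall d, lt d (split_point x) -> e x d = e x' d).
Proof.
  intros Hx Hx' Hxx' Hv Hagree.
  destruct (split_point_spec x Hx) as [_ [Hagree_n Hr]]. set (d := split_point x) in *.
  rewrite Hv in Hr.
  destruct (next_in_spec x) as [Hn [_ Hmin]].
  destruct (Hmin x' Hx' Hxx') as [Hlt|Heq]; [|rewrite Heq in Hr; exact (r_irrefl _ Hr)].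
  destruct (Hchain _ _ Hn Hx' Hlt) as [d' [_ [Hagree' Hr']]].
  destruct (lt_total d' d) as [h|[->|h]].
  - rewrite <- (Hagree_n d' h), (Hagree d' h) in Hr'. exact (r_irrefl _ Hr').
  - exact (r_irrefl _ (r_trans _ _ _ Hr Hr')).
  - rewrite (Hagree' d h) in Hr. exact (r_irrefl _ Hr).
Qed.

Lemma lex_chain_embeds : exists d, lt d l /\ embeds_in_power theta d.
Proof.
  destruct (unbounded_fiber_bounded H split_point l HU) as [d Hd].
  { intros x Hx. now apply split_point_spec. }
  assert (Hdl : lt d l).
  { destruct (Hd d) as [x [[Hx <-] _]]. now apply split_point_spec. }
  destruct (unbounded_fiber_bounded _ (fun x => e x d) theta Hd) as [v Hv].
  { intros x _. now apply Hval. }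
  destruct (card_full_of_unbounded _ Hv) as [h [Hh Hinj]].
  exists d. split; auto. exists (fun z => e (h z)). split.
  - intros x d' Hd'. apply Hval. eapply lt_trans; eauto.
  - intros z z' Hagree. apply Hinj; try exact I.
    destruct (Hh z I) as [[Hz Ez] Vz], (Hh z' I) as [[Hz' Ez'] Vz'].
    destruct (lt_total (h z) (h z')) as [q|[q|q]]; auto; exfalso.
    + apply (split_point_separates _ _ Hz Hz' q); rewrite Ez; [congruence|exact Hagree].
    + apply (split_point_separates _ _ Hz' Hz q); rewrite Ez'; [congruence|].
      intros d' Hd'. symmetry. auto.
Qed.

End LexChain.

Section Coloring.
Variables (theta : K) (C : K -> K -> K -> Prop) (i : K -> K).
Hypothesis Hbox : boxminus_minus_seq lt theta C i.

Lemma box_club a k :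
  is_limit a -> le lt (i a) k -> lt k theta -> club_in lt a (C a k).
Proof. intros Ha. destruct Hbox as [H _]. apply (H a Ha). Qed.

Lemma box_index_lt a : is_limit a -> lt (i a) theta.
Proof. intros Ha. destruct Hbox as [H _]. apply (H a Ha). Qed.

Lemma box_restrict a k a' :
  is_limit a -> le lt (i a) k -> lt k theta -> acc lt (C a k) a' -> E_ge lt theta a' ->
  le lt (i a') k /\ set_eq (C a' k) (restrict lt (C a k) a').
Proof. destruct Hbox as [_ [H _]]. apply H. Qed.

Lemma box_eventually_coherent a' a :
  is_limit a' -> is_limit a -> lt a' a ->
  exists k0, lt k0 theta /\
    forall k, le lt k0 k -> lt k theta -> le lt (i a) k -> le lt (i a') k ->
      set_eq (C a' k) (restrict lt (C a k) a').
Proof. destruct Hbox as [_ [_ [H _]]]. apply H. Qed.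

Lemma box_not_threaded D :
  club lt D ->
  exists a, acc lt D a /\ E_ge lt theta a /\
    forall k, le lt (i a) k -> lt k theta -> ~ set_eq (restrict lt D a) (C a k).
Proof. destruct Hbox as [_ [_ [_ H]]]. apply H. Qed.

Lemma C_below a k x :
  is_limit a -> le lt (i a) k -> lt k theta -> C a k x -> lt x a.
Proof. intros Ha Hi Hk. apply (box_club a k Ha Hi Hk). Qed.

Lemma C_cofinal a k y :
  is_limit a -> le lt (i a) k -> lt k theta -> lt y a -> exists x, C a k x /\ le lt y x.
Proof. intros Ha Hi Hk. apply (box_club a k Ha Hi Hk). Qed.

Lemma C_closed a k b :
  is_limit a -> le lt (i a) k -> lt k theta -> lt b a -> acc lt (C a k) b -> C a k b.
Proof. intros Ha Hi Hk. apply (box_club a k Ha Hi Hk). Qed.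

Lemma exists_limit_gt x : exists a, is_limit a /\ lt x a.
Proof.
  assert (HD : club lt (lt x)).
  { split.
    - intros b. destruct (exists_common_bound (@full K) x b I I) as [m [_ [Hxm Hbm]]].
      destruct (exists_gt m) as [y Hmy]. exists y.
      split; [|left]; eapply le_lt_trans; eauto.
    - intros b [[y Hy] Hacc]. destruct (Hacc y Hy) as [g [Hxg [_ Hgb]]]. eapply lt_trans; eauto. }
  destruct (box_not_threaded _ HD) as [a [Ha _]].
  exists a. split; [eapply is_limit_of_acc; eauto|].
  destruct Ha as [[y Hy] Hacc]. destruct (Hacc y Hy) as [g [Hxg [_ Hga]]]. eapply lt_trans; eauto.
Qed.

Definition limit_above (x : K) : K := least (fun a => is_limit a /\ le lt x a).

Lemma limit_above_spec x :
  is_limit (limit_above x) /\ le lt x (limit_above x) /\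
  forall a, is_limit a -> le lt x a -> le lt (limit_above x) a.
Proof.
  destruct (least_spec (fun a => is_limit a /\ le lt x a)) as [[Hl Hx] Hmin].
  - destruct (exists_limit_gt x) as [a [Ha Hxa]]. exists a. split; auto. now left.
  - split; [|split]; auto.
Qed.

Lemma limit_above_mono x y : le lt x y -> le lt (limit_above x) (limit_above y).
Proof.
  intros Hxy. destruct (limit_above_spec y) as [Hl [Hy _]].
  apply limit_above_spec; auto. eapply le_trans; eauto.
Qed.

Lemma limit_above_fix a : is_limit a -> limit_above a = a.
Proof.
  intros Ha. apply le_antisym; [apply limit_above_spec; auto using le_refl|apply limit_above_spec].
Qed.

Definition coherent (a b k : K) : Prop :=
  le lt (i a) k /\ le lt (i b) k /\ lt k theta /\
  forall k', le lt k k' -> lt k' theta -> set_eq (C a k') (restrict lt (C b k') a).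

Lemma coherent_mono a b k k' :
  coherent a b k -> le lt k k' -> lt k' theta -> coherent a b k'.
Proof.
  intros [Ha [Hb [_ Hcoh]]] Hkk' Hk'. split; [|split; [|split]]; eauto using le_trans.
Qed.

Lemma coherent_exists a b :
  is_limit a -> is_limit b -> le lt a b -> exists k, coherent a b k.
Proof.
  intros Ha Hb [Hab| <-].
  - destruct (box_eventually_coherent a b Ha Hb Hab) as [k0 [Hk0 Hcoh]].
    destruct (exists_common_bound (fun m => lt m theta) k0 (i a)) as [m1 [Hm1 [H0 Ha1]]];
      auto using box_index_lt.
    destruct (exists_common_bound (fun m => lt m theta) m1 (i b)) as [m [Hm [H1 Hbm]]];
      auto using box_index_lt.
    exists m. split; [|split; [|split]]; eauto using le_trans.
    intros k Hk Hk'. apply Hcoh; eauto using le_trans.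
  - exists (i a). split; [|split; [|split]]; auto using le_refl, box_index_lt.
    intros k Hk Hk' x. split.
    + intros Hx. split; auto. eapply C_below; eauto.
    + now intros [Hx _].
Qed.

Lemma coherent_trans a b g k :
  le lt a b -> coherent a b k -> coherent b g k -> coherent a g k.
Proof.
  intros Hab [Ha [_ [Hk Hab_coh]]] [_ [Hg [_ Hbg_coh]]].
  split; [|split; [|split]]; auto. intros k' H1 H2 x.
  rewrite (Hab_coh k' H1 H2 x). unfold restrict. rewrite (Hbg_coh k' H1 H2 x).
  unfold restrict. split; [now intros [[? ?] ?]|]. intros [? ?].
  repeat split; auto. eapply lt_le_trans; eauto.
Qed.

Lemma coherent_cancel a b g k :
  le lt a b -> coherent a g k -> coherent b g k -> coherent a b k.
Proof.
  intros Hab [Ha [_ [Hk Hag_coh]]] [Hb [_ [_ Hbg_coh]]].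
  split; [|split; [|split]]; auto. intros k' H1 H2 x.
  rewrite (Hag_coh k' H1 H2 x). unfold restrict. rewrite (Hbg_coh k' H1 H2 x).
  split; [intros [? ?]|now intros [[? ?] ?]].
  repeat split; auto. eapply lt_le_trans; eauto.
Qed.

Definition color (x y : K) : K := least (coherent (limit_above x) (limit_above y)).

Lemma color_spec x y : le lt x y ->
  coherent (limit_above x) (limit_above y) (color x y) /\
  forall k, coherent (limit_above x) (limit_above y) k -> le lt (color x y) k.
Proof.
  intros Hxy. apply least_spec, coherent_exists;
    [apply limit_above_spec|apply limit_above_spec|now apply limit_above_mono].
Qed.

Lemma color_le x y k :
  le lt x y -> coherent (limit_above x) (limit_above y) k -> le lt (color x y) k.
Proof. intros Hxy. apply (color_spec x y Hxy). Qed.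

Lemma coherent_of_color_le x y k :
  le lt x y -> le lt (color x y) k -> lt k theta -> coherent (limit_above x) (limit_above y) k.
Proof. intros Hxy Hk Hk'. eapply coherent_mono; eauto. apply (color_spec x y Hxy). Qed.

Theorem color_into : coloring_into lt theta color.
Proof. intros x y Hxy. apply (color_spec x y (lt_le _ _ Hxy)). Qed.

Theorem color_subadditive : subadditive lt color.
Proof.
  intros a b g Hab Hbg. assert (Hag : lt a g) by (eapply lt_trans; eauto).
  assert (Hl : le lt (limit_above a) (limit_above b)) by (apply limit_above_mono; now left).
  split; apply le_either with (P := fun m => lt m theta); auto using color_into;
    intros m Hm H1 H2; apply color_le; auto using lt_le.
  - apply coherent_trans with (limit_above b); auto;
      apply coherent_of_color_le; auto using lt_le.
  - apply coherent_cancel with (limit_above g); auto;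
      apply coherent_of_color_le; auto using lt_le.
Qed.

Lemma coherent_of_acc a b j :
  is_limit b -> le lt (i b) j -> lt j theta -> E_ge lt theta a ->
  (forall k, le lt j k -> lt k theta -> acc lt (C b k) a) -> coherent a b j.
Proof.
  intros Hb Hi Hj HE Hacc.
  destruct (box_restrict b j a Hb Hi Hj (Hacc j (le_refl j) Hj) HE) as [Hia _].
  split; [|split; [|split]]; auto. intros k Hk Hk'.
  apply (box_restrict b k a Hb (le_trans _ _ _ Hi Hk) Hk' (Hacc k Hk Hk') HE).
Qed.

Lemma acc_of_coherent_cofinal a b j k :
  le lt j k -> lt k theta -> (exists y, lt y a) ->
  (forall y, lt y a -> exists l, is_limit l /\ lt y l /\ lt l a /\ coherent l b j) ->
  acc lt (C b k) a.
Proof.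
  intros Hk Hk' Ha Hcof. split; auto. intros y Hy.
  destruct (Hcof y Hy) as [l [Hl [Hyl [Hla [Hil [_ [_ Hcoh]]]]]]].
  destruct (proj2 Hl y Hyl) as [g [_ [Hyg Hgl]]].
  assert (Hik : le lt (i l) k) by (eapply le_trans; eauto).
  destruct (C_cofinal l k g Hl Hik Hk' Hgl) as [x [Hx Hgx]].
  exists x. split; [|split].
  - apply (Hcoh k Hk Hk' x) in Hx. apply Hx.
  - eapply lt_le_trans; eauto.
  - eapply lt_trans; [eapply C_below|]; eauto.
Qed.

Theorem color_closed : sigma_closed lt theta (E_ge lt theta) color.
Proof.
  intros a b j Hab Hj HE Hacc.
  assert (Ha : is_limit a) by (eapply is_limit_of_acc; eauto).
  apply color_le; [now left|]. rewrite (limit_above_fix a Ha).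
  assert (Hcoh : forall e, lt e a -> le lt (color e b) j ->
                   coherent (limit_above e) (limit_above b) j).
  { intros e Hea Hej. apply coherent_of_color_le; auto. left; eapply lt_trans; eauto. }
  destruct (classic (exists e, lt e a /\ le lt (color e b) j /\ limit_above e = a))
    as [[e [Hea [Hej Hle]]]|N].
  { rewrite <- Hle. auto. }
  destruct Hacc as [[y0 Hy0] Hacc].
  destruct (Hacc y0 Hy0) as [e0 [He0j [_ He0a]]].
  destruct (Hcoh e0 He0a He0j) as [_ [Hib _]].
  apply coherent_of_acc; auto; [apply limit_above_spec|].
  intros k Hk Hk'. apply (acc_of_coherent_cofinal a _ j k Hk Hk' (ex_intro _ y0 Hy0)).
  intros y Hy. destruct (Hacc y Hy) as [e [Hej [Hye Hea]]].
  exists (limit_above e). split; [apply limit_above_spec|split; [|split]]; auto.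
  - eapply lt_le_trans; [exact Hye|apply limit_above_spec].
  - destruct (limit_above_mono e a (lt_le _ _ Hea)) as [h|h];
      rewrite (limit_above_fix a Ha) in h; auto.
    exfalso. apply N. eauto.
Qed.

Lemma no_coherent_thread (H : K -> Prop) (f : K -> K) j :
  lt j theta -> unbounded lt H ->
  (forall b, H b -> is_limit (f b) /\ le lt b (f b) /\ le lt (i (f b)) j) ->
  (forall b b', H b -> H b' -> lt b b' ->
     set_eq (C (f b) j) (restrict lt (C (f b') j) (f b))) ->
  False.
Proof.
  intros Hj HU Hf Hcoh.
  set (D := fun x => exists b, H b /\ C (f b) j x).
  assert (D_below : forall b x, H b -> D x -> lt x (f b) -> C (f b) j x).
  { intros b x Hb [b' [Hb' Hx]] Hxb. destruct (lt_total b b') as [h|[<-|h]]; auto.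
    - apply (Hcoh b b' Hb Hb' h). now split.
    - apply (Hcoh b' b Hb' Hb h) in Hx. apply Hx. }
  assert (acc_D : forall g b, H b -> lt g (f b) -> acc lt D g -> acc lt (C (f b) j) g).
  { intros g b Hb Hgb [H1 H2]. split; auto. intros y Hy.
    destruct (H2 y Hy) as [x [Hx [H3 H4]]].
    exists x. split; auto. apply D_below; auto. eapply lt_trans; eauto. }
  assert (HD : club lt D).
  { split.
    - intros y. destruct (unbounded_gt H HU y) as [b [Hb Hyb]].
      destruct (Hf b Hb) as [Hl [Hbf Hi]].
      destruct (C_cofinal (f b) j y Hl Hi Hj (lt_le_trans _ _ _ Hyb Hbf)) as [x [Hx Hyx]].
      exists x. split; auto. now exists b.
    - intros g Hg. destruct (unbounded_gt H HU g) as [b [Hb Hgb]].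
      destruct (Hf b Hb) as [Hl [Hbf Hi]].
      assert (Hgf : lt g (f b)) by (eapply lt_le_trans; eauto).
      exists b. split; auto. apply C_closed; auto. }
  destruct (box_not_threaded D HD) as [a [Ha [HE Hne]]].
  destruct (unbounded_gt H HU a) as [b [Hb Hab]]. destruct (Hf b Hb) as [Hl [Hbf Hi]].
  assert (Haf : lt a (f b)) by (eapply lt_le_trans; eauto).
  destruct (box_restrict (f b) j a Hl Hi Hj (acc_D a b Hb Haf Ha) HE) as [Hia HCa].
  apply (Hne j Hia Hj). intros x. rewrite (HCa x). split.
  - intros [Hx Hxa]. split; auto. apply D_below; auto. eapply lt_trans; eauto.
  - intros [Hx Hxa]. split; auto. now exists b.
Qed.

Theorem color_U : witnesses_U lt theta color.
Proof.
  intros H HH j Hj. apply NNPP. intros N.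
  assert (Hcoh : forall a b, H a -> H b -> lt a b ->
                   coherent (limit_above a) (limit_above b) j).
  { intros a b Ha Hb Hab. apply coherent_of_color_le; auto using lt_le.
    left. apply not_le_lt. intros h. apply N. now exists a, b. }
  assert (HU := unbounded_of_card_full H HH).
  apply (no_coherent_thread H limit_above j Hj HU).
  - intros b Hb. destruct (unbounded_gt H HU b) as [b' [Hb' Hbb']].
    split; [|split]; try apply limit_above_spec. apply (Hcoh b b' Hb Hb' Hbb').
  - intros b b' Hb Hb' Hbb'. destruct (Hcoh b b' Hb Hb' Hbb') as [_ [_ [_ Hc]]].
    exact (Hc j (le_refl j) Hj).
Qed.

End Coloring.

Section WeaklyCompact.
Variable theta : K.
Hypothesis HWC : weakly_compact lt.

Lemma weakly_compact_homogeneous (P : K -> K -> Prop) :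
  exists H, unbounded lt H /\
    ((forall x y, H x -> H y -> lt x y -> P x y) \/
     (forall x y, H x -> H y -> lt x y -> ~ P x y)).
Proof.
  destruct HWC as [_ Hpart].
  destruct (Hpart (fun x y => if excluded_middle_informative (P x y) then true else false))
    as [H [HH [col Hcol]]].
  exists H. split; [now apply unbounded_of_card_full|].
  destruct col; [left|right]; intros x y Hx Hy Hxy; specialize (Hcol x y Hx Hy Hxy);
    destruct (excluded_middle_informative (P x y)); easy.
Qed.

Lemma power_small l : ~ embeds_in_power theta l.
Proof.
  induction l as [l IH] using (well_founded_ind lt_wf). intros [e [Hval Hinj]].
  assert (Hsmaller : exists d, lt d l /\ embeds_in_power theta d).
  { destruct (weakly_compact_homogeneous (fun x y => lex lt l (e x) (e y)))
      as [H [HU [Hup|Hdown]]].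
    - apply (lex_chain_embeds theta lt l e H); eauto using lt_trans, lt_irrefl.
    - apply (lex_chain_embeds theta (fun p q => lt q p) l e H);
        eauto using lt_trans, lt_irrefl.
      intros x y Hx Hy Hxy. apply lex_flip.
      destruct (lex_total l (e x) (e y)) as [h|h]; auto.
      + apply NNPP. intros N. apply (lt_irrefl x). rewrite (Hinj x y) at 2; auto.
        intros d Hd. apply NNPP. intros Hne. apply N. eauto.
      + exfalso. exact (Hdown x y Hx Hy Hxy h). }
  destruct Hsmaller as [d [Hd Hemb]]. exact (IH d Hd Hemb).
Qed.

Section Branch.
Variable t : K -> K -> K.
Hypothesis Ht : forall b x, lt x b -> lt (t b x) theta.
Variable H : K -> Prop.
Hypothesis HU : unbounded lt H.
Hypothesis Hhom :
  (forall x y, H x -> H y -> lt x y -> lex lt x (t x) (t y)) \/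
  (forall x y, H x -> H y -> lt x y -> ~ lex lt x (t x) (t y)).

Definition frequent (a : K) (s : K -> K) : Prop :=
  unbounded lt (fun b => H b /\ lt a b /\ forall x, lt x a -> t b x = s x).

Lemma frequent_exists a : exists s, frequent a s.
Proof.
  destruct (unbounded_fiber _ _ (fun b => trunc a (t b)) (unbounded_above H a HU))
    as [s Hs].
  - intros g Hg Hinj. apply (power_small a). exists (fun z => t (g z)). split.
    + intros z d Hd. apply Ht. eapply lt_trans; [exact Hd|apply Hg].
    + intros z z' Hagree. apply Hinj. now apply trunc_ext.
  - exists s. intros y. destruct (Hs y) as [b [[[Hb Hab] Hs_b] Hyb]].
    exists b. repeat split; auto. intros x Hx. rewrite <- Hs_b. now rewrite trunc_lt.
Qed.

Lemma frequent_not_lex a s1 s2 : frequent a s1 -> frequent a s2 -> ~ lex lt a s1 s2.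
Proof.
  intros H1 H2 Hlex.
  destruct (unbounded_gt _ H1 a) as [b1 [[Hb1 [_ E1]] Hab1]].
  destruct (unbounded_gt _ H2 b1) as [b2 [[Hb2 [Hab2 E2]] H12]].
  destruct (unbounded_gt _ H1 b2) as [b3 [[Hb3 [_ E3]] H23]].
  assert (L12 : lex lt b1 (t b1) (t b2)).
  { apply (lex_agree lt a b1 s1 s2); auto using lt_le; intros x Hx; symmetry; auto. }
  assert (L32 : lex lt b2 (t b3) (t b2)).
  { apply (lex_agree lt a b2 s1 s2); auto using lt_le; intros x Hx; symmetry; auto. }
  destruct Hhom as [Hup|Hdown].
  - exact (lex_asym _ _ _ _ (Hup b2 b3 Hb2 Hb3 H23) L32).
  - exact (Hdown b1 b2 Hb1 Hb2 H12 L12).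
Qed.

Lemma frequent_unique a s1 s2 :
  frequent a s1 -> frequent a s2 -> forall x, lt x a -> s1 x = s2 x.
Proof.
  intros H1 H2 x Hx. apply NNPP. intros N.
  destruct (lex_total a s1 s2) as [h|h]; [eauto| |].
  - exact (frequent_not_lex a s1 s2 H1 H2 h).
  - exact (frequent_not_lex a s2 s1 H2 H1 h).
Qed.

Lemma frequent_mono a a' s : le lt a a' -> frequent a' s -> frequent a s.
Proof.
  intros Ha Hs y. destruct (Hs y) as [b [[Hb [Hab Hagree]] Hyb]].
  exists b. repeat split; auto.
  - eapply le_lt_trans; eauto.
  - intros x Hx. apply Hagree. eapply lt_le_trans; eauto.
Qed.

Lemma frequent_coherent a a' s s' x :
  frequent a s -> frequent a' s' -> lt x a -> lt x a' -> s x = s' x.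
Proof.
  intros Hs Hs' Hx Hx'. destruct (lt_total a a') as [h|[<-|h]].
  - apply (frequent_unique a); auto. eapply frequent_mono; eauto using lt_le.
  - now apply (frequent_unique a).
  - apply (frequent_unique a'); auto. eapply frequent_mono; eauto using lt_le.
Qed.

End Branch.

Lemma tree_branch (t : K -> K -> K) :
  (forall b x, lt x b -> lt (t b x) theta) ->
  exists s : K -> K, forall a, exists b, lt a b /\ forall x, lt x a -> t b x = s x.
Proof.
  intros Ht.
  destruct (weakly_compact_homogeneous (fun x y => lex lt x (t x) (t y))) as [H [HU Hhom]].
  set (level := fun a => epsilon (inhabits (fun _ : K => a)) (frequent t H a)).
  assert (Hlevel : forall a, frequent t H a (level a)).
  { intros a. apply epsilon_spec, (frequent_exists t Ht H HU). }
  exists (fun x => level (least (lt x)) x). intros a.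
  destruct (Hlevel a a) as [b [[_ [Hab Hb]] _]]. exists b. split; auto.
  intros x Hx. rewrite Hb; auto.
  apply (frequent_coherent t H Hhom a _ _ _ x (Hlevel a) (Hlevel _) Hx).
  apply (least_spec (lt x)), exists_gt.
Qed.

Lemma no_subadditive_U_coloring c :
  infinite_regular lt theta -> coloring_into lt theta c -> subadditive lt c ->
  witnesses_U lt theta c -> False.
Proof.
  intros Htheta Hc Hsub HU.
  destruct (tree_branch (fun b x => c x b)) as [s Hs]; [intros b x; apply Hc|].
  cbv beta in Hs.
  assert (Hs_lt : forall x, lt (s x) theta).
  { intros x. destruct (exists_gt x) as [a Ha]. destruct (Hs a) as [b [Hab Hb]].
    rewrite <- (Hb x Ha). apply Hc. eapply lt_trans; eauto. }
  destruct (unbounded_fiber_bounded (@full K) s theta) as [v Hv]; auto.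
  { intros b. exists b. split; [exact I|apply le_refl]. }
  assert (Hvt : lt v theta) by (destruct (Hv v) as [x [[_ <-] _]]; apply Hs_lt).
  destruct (regular_exists_between theta v Htheta Hvt) as [v' [Hvv' Hv't]].
  destruct (HU _ (card_full_of_unbounded _ Hv) v' Hv't)
    as [x [x' [[_ Hx] [[_ Hx'] [Hxx' Hle]]]]].
  destruct (exists_gt x') as [a Ha]. destruct (Hs a) as [b [Hab Hb]].
  assert (Hxa : lt x a) by (eapply lt_trans; eauto).
  apply (le_not_lt _ _ Hle).
  destruct (Hsub x x' b Hxx' (lt_trans _ _ _ Ha Hab)) as [_ [h|h]];
    [rewrite (Hb x Hxa), Hx in h|rewrite (Hb x' Ha), Hx' in h]; eapply le_lt_trans; eauto.
Qed.

End WeaklyCompact.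

End Kappa.
End Order.

Theorem proposition3p8 (K : Type) (lt : K -> K -> Prop)
  (Hwo : strict_well_order lt)
  (Hkappa : kappa_infinite_regular lt)
  (theta : K) (Htheta : infinite_regular lt theta)
  (Hbox : boxminus_minus lt theta) :
  (exists c : K -> K -> K,
     coloring_into lt theta c /\
     sigma_closed lt theta (E_ge lt theta) c /\
     subadditive lt c /\
     witnesses_U lt theta c) /\
  ~ weakly_compact lt.
Proof.
  destruct Hbox as [C [i HC]].
  set (c := color K lt Hkappa theta C i).
  split.
  - exists c. split; [|split; [|split]].
    + now apply color_into.
    + now apply color_closed.
    + now apply color_subadditive.
    + now apply color_U.
  - intros HWC. apply (no_subadditive_U_coloring K lt Hwo Hkappa theta HWC c Htheta).
    + now apply color_into.
    + now apply color_subadditive.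
    + now apply color_U.
Qed.
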